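(* Let $G=(V,E)$ be a directed graph with $n=|V|$, $h>0$ a length bound, $1\le\alpha\le\log n$, and $u,v,w\in V$. Then: (1) $\sum_{a\in V}w_h^\alpha(u,a)\le n$; (2) $\sum_{a\in V}w_h^\alpha(u,a)\ge1$; (3) $w_h^\alpha(u,v)\ge 2^{-\alpha\overline{\mathrm{dist}}(u,v)/h}-1/n^2$; (4) $2^{-\alpha\overline{\mathrm{dist}}(w,v)/h}\cdot w_h^\alpha(u,v)-1/n^2\le w_h^\alpha(u,w)\le 2^{\alpha\overline{\mathrm{dist}}(w,v)/h}\cdot\left(w_h^\alpha(u,v)+1/n^2\right)$.
   Context: $G$ has positive integer edge lengths; $\mathrm{dist}(u,v)$ is the directed shortest-path distance ($\infty$ if unreachable) and $\overline{\mathrm{dist}}(u,v)=\mathrm{dist}(u,v)+\mathrm{dist}(v,u)$ (round-trip distance). The $h$-length $\alpha$-exponential distance weight is $w_h^\alpha(u,v)=1$ if $u=v$; $w_h^\alpha(u,v)=2^{-\alpha\overline{\mathrm{dist}}(u,v)/h}$ if $u\ne v$ and $\overline{\mathrm{dist}}(u,v)\le\frac{2h\log_2n}{\alpha}$; and $w_h^\alpha(u,v)=0$ otherwise. *)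

From HB Require Import structures.
From mathcomp Require Import all_boot all_order all_algebra.
From mathcomp Require Import all_classical all_reals all_analysis.
Set Implicit Arguments. Unset Strict Implicit. Unset Printing Implicit Defensive.
Import Order.TTheory GRing.Theory Num.Theory.
Local Open Scope ring_scope.

Section Graph.
Variable V : finType.
Variable E : rel V.
Variable len : V -> V -> nat.

Fixpoint walk_len (x : V) (p : seq V) : nat :=
  match p with
  | [::] => 0
  | y :: p' => len x y + walk_len y p'
  end.

Definition walk_of_len (u v : V) (d : nat) : Prop :=
  exists p : seq V, [/\ path E u p, last u p = v & walk_len u p = d].

(* directed shortest-path distance; None encodes +infinity (unreachable) *)
Definition dist (u v : V) : option nat :=
  match pselect (exists d, `[< walk_of_len u v d >]) with
  | left H => Some (ex_minn H)
  | right _ => None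
  end.

Definition rdist (u v : V) : option nat :=
  match dist u v, dist v u with
  | Some a, Some b => Some (a + b)%N
  | _, _ => None
  end.

Variable R : realType.

Definition log2 (x : R) : R := ln x / ln 2.

Definition expw (h alpha : R) (u v : V) : R :=
  if u == v then 1 else
  match rdist u v with
  | Some d => if d%:R <= 2 * h * log2 #|V|%:R / alpha
              then 2 `^ (- (alpha * d%:R / h)) else 0
  | None => 0
  end.

Definition decay (c : R) (d : option nat) : \bar R :=
  match d with Some d => (2 `^ (- (c * d%:R)))%:E | None => 0%E end.

Definition growth (c : R) (d : option nat) : \bar R :=
  match d with Some d => (2 `^ (c * d%:R))%:E | None => (+oo)%E end.

End Graph.

From HB Require Import structures.
From mathcomp Require Import all_boot all_order all_algebra.
From mathcomp Require Import all_classical all_reals all_analysis.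
From mathcomp Require Import lra.
Import Order.TTheory GRing.Theory Num.Theory.
Local Open Scope ring_scope.
Set Implicit Arguments. Unset Strict Implicit. Unset Printing Implicit Defensive.

(* The round-trip distance obeys the triangle inequality, so the decay
   [2^(-alpha rdist / h)] is submultiplicative along a detour through a third
   vertex.  The weight equals this decay except beyond the cutoff
   [2 h log2 n / alpha], where the decay is below [2^(-2 log2 n) = 1/n^2];
   with [0 <= w <= 1 = w(u,u)] these two facts give all five estimates. *)

Section Distances.
Variables (V : finType) (E : rel V) (len : V -> V -> nat).

Lemma walk_len_cat x p q :
  walk_len len x (p ++ q) = (walk_len len x p + walk_len len (last x p) q)%N.
Proof. by elim: p x => [|y p IHp] x //=; rewrite IHp addnA. Qed.

Lemma walk_of_len_cat x y z a b :
  walk_of_len E len x y a -> walk_of_len E len y z b ->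
  walk_of_len E len x z (a + b).
Proof.
move=> [p [Ep <- <-]] [q [Eq <- <-]]; exists (p ++ q).
by rewrite cat_path last_cat walk_len_cat Ep Eq.
Qed.

Lemma dist_walk x y a : dist E len x y = Some a -> walk_of_len E len x y a.
Proof. by rewrite /dist; case: pselect => // H [<-]; case: ex_minnP => m /asboolP. Qed.

Lemma dist_le_walk x y b : walk_of_len E len x y b ->
  exists2 a, dist E len x y = Some a & (a <= b)%N.
Proof.
move=> walk_b; rewrite /dist; case: pselect => [H|[]]; last first.
  by exists b; apply/asboolP.
by case: ex_minnP => m _ min_m; exists m => //; apply/min_m/asboolP.
Qed.

Lemma dist_refl x : dist E len x x = Some 0%N.
Proof.
have walk0 : walk_of_len E len x x 0 by exists [::].
by have [a ->] := dist_le_walk walk0; rewrite leqn0 => /eqP ->.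
Qed.

Lemma dist_triangle x y z a b :
  dist E len x y = Some a -> dist E len y z = Some b ->
  exists2 m, dist E len x z = Some m & (m <= a + b)%N.
Proof.
by move=> /dist_walk wxy /dist_walk wyz; apply: dist_le_walk (walk_of_len_cat wxy wyz).
Qed.

Lemma rdist_refl x : rdist E len x x = Some 0%N.
Proof. by rewrite /rdist dist_refl. Qed.

Lemma rdistC x y : rdist E len x y = rdist E len y x.
Proof. by rewrite /rdist; case: dist => [a|]; case: dist => [b|] //; rewrite addnC. Qed.

Lemma rdist_triangle x y z a b :
  rdist E len x y = Some a -> rdist E len y z = Some b ->
  exists2 m, rdist E len x z = Some m & (m <= a + b)%N.
Proof.
rewrite /rdist.
case exy: (dist _ _ x y) => [a1|] //; case eyx: (dist _ _ y x) => [a2|] // [<-].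
case eyz: (dist _ _ y z) => [b1|] //; case ezy: (dist _ _ z y) => [b2|] // [<-].
have [m1 -> le_m1] := dist_triangle exy eyz.
have [m2 -> le_m2] := dist_triangle ezy eyx.
exists (m1 + m2)%N => //.
by rewrite addnACA [(a2 + b2)%N]addnC leq_add.
Qed.

End Distances.

Section Decay.
Variable R : realType.

Lemma powR2_log2 (x : R) : 0 < x -> 2 `^ log2 x = x.
Proof.
move=> x_gt0; rewrite /powR pnatr_eq0 /log2 mulfVK ?lnK //.
by rewrite gt_eqF // ln_gt0 // ltr1n.
Qed.

Lemma powR2_add (x y : R) : 2 `^ (x + y) = 2 `^ x * 2 `^ y.
Proof. by rewrite powRD // pnatr_eq0 implybT. Qed.

Lemma ler_powR2 : {mono powR (2 : R) : x y / x <= y}.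
Proof. by move=> x y; rewrite /powR pnatr_eq0 ler_expR ler_pM2r // ln_gt0 // ltr1n. Qed.

Definition rdecay (c : R) (d : option nat) : R :=
  if d is Some d then 2 `^ (- (c * d%:R)) else 0.

Lemma decayE (c : R) d : decay c d = (rdecay c d)%:E.
Proof. by case: d. Qed.

Lemma rdecay_ge0 (c : R) d : 0 <= rdecay c d.
Proof. by case: d => [d|] //=; apply: powR_ge0. Qed.

Lemma rdecay_le1 (c : R) d : 0 <= c -> rdecay c d <= 1.
Proof.
move=> c_ge0; case: d => [d|] //=.
by rewrite -[leRHS](powRr0 2) ler_powR2 oppr_le0 mulr_ge0.
Qed.

End Decay.

Section Weights.
Variables (V : finType) (E : rel V) (len : V -> V -> nat).
Variables (R : realType) (h alpha : R).
Hypotheses (h_gt0 : 0 < h) (alpha_gt0 : 0 < alpha).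

Local Notation W := (expw E len h alpha).
Local Notation rdec x y := (rdecay (alpha / h) (rdist E len x y)).
Local Notation n := (#|V|%:R : R).

Let c_ge0 : 0 <= alpha / h. Proof. by rewrite divr_ge0 ?ltW. Qed.

Let card_gt0 (x : V) : 0 < n. Proof. by rewrite ltr0n; apply/card_gt0P; exists x. Qed.

Lemma rdecay_triangle x y z : rdec x y * rdec y z <= rdec x z.
Proof.
case exy: (rdist E len x y) => [a|]; last by rewrite mul0r rdecay_ge0.
case eyz: (rdist E len y z) => [b|]; last by rewrite mulr0 rdecay_ge0.
have [m -> le_m] := rdist_triangle exy eyz.
rewrite /= -powR2_add ler_powR2 -opprD -mulrDr lerN2 -natrD.
by rewrite ler_wpM2l // ler_nat.
Qed.

Lemma expw_ge0 x y : 0 <= W x y.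
Proof.
rewrite /expw; case: eqP => // _; case: rdist => [d|] //.
by case: ifP => // _; apply: powR_ge0.
Qed.

Lemma expw_le_rdecay x y : W x y <= rdec x y.
Proof.
rewrite /expw; case: eqP => [<-|_]; first by rewrite rdist_refl /= mulr0 oppr0 powRr0.
case: rdist => [d|] //=; case: ifP => _; last exact: powR_ge0.
by rewrite mulrAC.
Qed.

Lemma sum_expw_le_card x : \sum_(a : V) W x a <= n.
Proof.
apply: le_trans (_ : _ <= \sum_(a : V) 1) _; last by rewrite sumr_const.
apply: ler_sum => a _; apply: le_trans (expw_le_rdecay x a) _.
exact: rdecay_le1.
Qed.

Lemma sum_expw_ge1 x : 1 <= \sum_(a : V) W x a.
Proof.
rewrite (bigD1 x) //= {1}/expw eqxx lerDl.
by apply: sumr_ge0 => a _; apply: expw_ge0.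
Qed.

Lemma rdecay_cutoff (n_gt0 : 0 < n) (d : nat) :
  ~~ (d%:R <= 2 * h * log2 n / alpha) ->
  2 `^ (- (alpha / h * d%:R)) <= 1 / n ^+ 2.
Proof.
move=> beyond_cutoff; rewrite -ltNge ltr_pdivrMr // in beyond_cutoff.
rewrite div1r -powR_invn ?(ltW n_gt0) // -{1}(powR2_log2 n_gt0) -powRrM ler_powR2.
rewrite mulrN lerN2 (mulrAC alpha) ler_pdivlMr //.
lra.
Qed.

Lemma rdecay_le_expw x y : rdec x y <= W x y + 1 / n ^+ 2.
Proof.
rewrite /expw; case: eqP => _.
  by apply: le_trans (rdecay_le1 _ c_ge0) _; rewrite lerDl divr_ge0 ?exprn_ge0.
case: rdist => [d|] /=; last by rewrite add0r.
case: ifP => [_|/negbT beyond_cutoff]; first by rewrite mulrAC lerDl divr_ge0 ?exprn_ge0.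
by rewrite add0r rdecay_cutoff ?card_gt0.
Qed.

Lemma rdecay_mul_expw_le x y z : rdec z y * W x y <= W x z + 1 / n ^+ 2.
Proof.
apply: le_trans (rdecay_le_expw x z).
apply: le_trans (rdecay_triangle x y z).
by rewrite mulrC rdistC ler_wpM2r ?rdecay_ge0 ?expw_le_rdecay.
Qed.

Lemma expw_le_growth x y z :
  ((W x z)%:E <= growth (alpha / h) (rdist E len z y) * (W x y + 1 / n ^+ 2)%:E)%E.
Proof.
case ezy: (rdist E len z y) => [d|] /=; last first.
  by rewrite gt0_mulye ?leey // lte_fin ltr_wpDl ?expw_ge0 ?divr_gt0 ?exprn_gt0 ?card_gt0.
rewrite -EFinM lee_fin; apply: le_trans (expw_le_rdecay x z) _.
apply: le_trans (_ : _ <= 2 `^ (alpha / h * d%:R) * rdec x y) _; last first.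
  by rewrite ler_wpM2l ?powR_ge0 ?rdecay_le_expw.
have -> : rdec x z = 2 `^ (alpha / h * d%:R) * (2 `^ (- (alpha / h * d%:R)) * rdec x z).
  by rewrite mulrA -powR2_add subrr powRr0 mul1r.
rewrite ler_wpM2l ?powR_ge0 //.
by have := rdecay_triangle x z y; rewrite ezy mulrC.
Qed.

End Weights.

Theorem lemma3p11 (V : finType) (E : rel V) (len : V -> V -> nat)
  (len_pos : forall x y, E x y -> (0 < len x y)%N)
  (R : realType) (h alpha : R) (h_pos : 0 < h)
  (alpha_ge1 : 1 <= alpha) (alpha_le : alpha <= log2 (#|V|%:R : R))
  (u v w : V) :
  let n : R := #|V|%:R in
  let W := expw E len h alpha in
  [/\ \sum_(a : V) W u a <= n,
      1 <= \sum_(a : V) W u a,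
      (decay (alpha / h) (rdist E len u v) - (1 / n ^+ 2)%:E
         <= (W u v)%:E)%E,
      (decay (alpha / h) (rdist E len w v) * (W u v)%:E - (1 / n ^+ 2)%:E
         <= (W u w)%:E)%E
    & ((W u w)%:E
         <= growth (alpha / h) (rdist E len w v) * (W u v + 1 / n ^+ 2)%:E)%E].
Proof.
move=> n W; have alpha_gt0 : 0 < alpha by apply: lt_le_trans alpha_ge1.
split.
- exact: sum_expw_le_card.
- exact: sum_expw_ge1.
- by rewrite decayE -EFinB lee_fin lerBlDr rdecay_le_expw.
- by rewrite decayE -EFinM -EFinB lee_fin lerBlDr rdecay_mul_expw_le.
- exact: expw_le_growth.
Qed.
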